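(* Let $p,q\ge0$, $n=p+q\ge1$, $N=2^{\lfloor (n+1)/2\rfloor}$. Let $M\in\mathcal{G}^{\mathbb{C}}_{p,q}$ and $T:=M^\dagger M$. Then ${\rm rank}(M)=N$ if $C_{(N)}(M)\ne0$; for $k\in\{2,\dots,N-1\}$, ${\rm rank}(M)=k$ if $C_{(N)}(M)=0$, $C_{(j)}(T)=0$ for all $j=k+1,\dots,N-1$, and $C_{(k)}(T)\neq0$; ${\rm rank}(M)=1$ if $C_{(N)}(M)=0$, $C_{(j)}(T)=0$ for all $j=2,\dots,N-1$, and $M\ne0$; ${\rm rank}(M)=0$ if $M=0$.
   Context: Let $\mathcal{G}_{p,q}$ be the real Clifford algebra with identity $e$ and generators $e_1,\dots,e_n$ satisfying $e_ae_b+e_be_a=2\eta_{ab}e$, $\eta={\rm diag}(1,\dots,1,-1,\dots,-1)$ ($p$ ones, $q$ minus ones), basis elements $e_A=e_{a_1}\cdots e_{a_k}$ for $a_1<\dots<a_k$, and $\mathcal{G}^{\mathbb{C}}_{p,q}=\mathbb{C}\otimes\mathcal{G}_{p,q}$ with elements $M=\sum_A m_Ae_A$, $m_A\in\mathbb{C}$. Hermitian conjugation: $M^\dagger=\sum_A\overline{m_A}(e_A)^{-1}$. Let $\langle M\rangle_0$ denote the coefficient of $e$. Let $\beta$ be an algebra isomorphism from $\mathcal{G}^{\mathbb{C}}_{p,q}$ onto ${\rm Mat}(N,\mathbb{C})$ if $n$ is even, and onto block-diagonal matrices ${\rm diag}(X,Y)$, $X,Y\in{\rm Mat}(N/2,\mathbb{C})$,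 if $n$ is odd. The rank is ${\rm rank}(M):={\rm rank}(\beta(M))$, independent of $\beta$. The characteristic polynomial coefficients $C_{(k)}(M)$ are defined by $\det(\lambda I_N-\beta(M))=\lambda^N-C_{(1)}(M)\lambda^{N-1}-\cdots-C_{(N)}(M)$ (independent of $\beta$); equivalently by the recursion $M_{(1)}=M$, $C_{(k)}=\frac{N}{k}\langle M_{(k)}\rangle_0$, $M_{(k+1)}=M(M_{(k)}-C_{(k)})$, $k=1,\dots,N$. *)

(* Complexified Clifford algebra G^C_{p,q} realised on the
   coefficient space {ffun {set 'I_(p+q)} -> R[i]} (R a real closed field,
   in the theorem R : realType, so that R[i] is the field of complex numbers). *)
From HB Require Import structures.
From mathcomp Require Import all_boot all_order all_algebra.
From mathcomp Require Import complex.
From mathcomp Require Import reals.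
Set Implicit Arguments. Unset Strict Implicit. Unset Printing Implicit Defensive.
Import Order.TTheory GRing.Theory Num.Theory.
Local Open Scope ring_scope.

Section Clifford.
Variables (R : rcfType) (p q : nat).
Local Notation n := (p + q)%N.
Local Notation C := R[i].

(* elements M = sum_A m_A e_A ; the index set A ⊆ {0,...,n-1} stands for
   e_A = e_{a_1} ... e_{a_k} with a_1 < ... < a_k (0-based generators). *)
Definition cl := {ffun {set 'I_n} -> C}.

Definition eta (a : 'I_n) : C := if (a < p)%N then 1 else -1.

(* e_A e_B = (-1)^{#{(a,b) in A x B | b < a}} (prod_{c in A∩B} eta_cc) e_{A Δ B} *)
Definition cl_sign (A B : {set 'I_n}) : C :=
  (-1) ^+ #|[set ab : 'I_n * 'I_n | (ab.1 \in A) && (ab.2 \in B) && (ab.2 < ab.1)%N]|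
  * \prod_(c in A :&: B) eta c.

Definition cl_zero : cl := [ffun _ => 0].
Definition cl_one : cl := [ffun A => if A == set0 then 1 else 0].
Definition cl_add (x y : cl) : cl := [ffun A => x A + y A].
Definition cl_scale (c : C) (x : cl) : cl := [ffun A => c * x A].
Definition cl_mul (x y : cl) : cl :=
  [ffun D => \sum_(A : {set 'I_n}) \sum_(B : {set 'I_n} | (A :\: B) :|: (B :\: A) == D)
                x A * y B * cl_sign A B].

Definition scal_part (x : cl) : C := x set0.

(* (e_A)^{-1} = e_{a_k}^{-1} ... e_{a_1}^{-1} with e_a^{-1} = eta_aa e_a,
   i.e. (e_A)^{-1} = (-1)^{k(k-1)/2} (prod_{a in A} eta_aa) e_A, k = |A|. *)
Definition basis_inv_coef (A : {set 'I_n}) : C :=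
  (-1) ^+ 'C(#|A|, 2) * \prod_(a in A) eta a.

Definition cl_dag (x : cl) : cl := [ffun A => (x A)^* * basis_inv_coef A].

End Clifford.

Definition cl_N (n : nat) : nat := 2 ^ (n.+1)./2.

Definition block_diag_mx (R : nzRingType) (N : nat) (A : 'M[R]_N) : Prop :=
  forall i j : 'I_N, (i < N./2)%N != (j < N./2)%N -> A i j = 0.

Definition is_cl_iso (R : rcfType) (p q : nat)
    (beta : cl R p q -> 'M[R[i]]_(cl_N (p + q))) : Prop :=
  (forall x y, beta (cl_add x y) = beta x + beta y) /\
  (forall c x, beta (cl_scale c x) = c *: beta x) /\
  (forall x y, beta (cl_mul x y) = beta x *m beta y) /\
  beta (cl_one R p q) = 1%:M /\
  injective beta /\
  (forall A : 'M[R[i]]_(cl_N (p + q)),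
        (exists x, beta x = A) <->
        (if odd (p + q) then block_diag_mx A else True)).

(* C_(k)(M) defined by det(lambda I_N - beta(M)) = lambda^N - C_(1) lambda^{N-1} - ... - C_(N) *)
Definition charcoef (R : rcfType) (p q : nat)
    (beta : cl R p q -> 'M[R[i]]_(cl_N (p + q))) (k : nat) (x : cl R p q) : R[i] :=
  - (char_poly (beta x))`_(cl_N (p + q) - k).

From Pilot Require Import Defs.
From HB Require Import structures.
From mathcomp Require Import all_boot all_order all_algebra.
From mathcomp Require Import complex.
From mathcomp Require Import reals.
From mathcomp Require Import zify ring.
Import Order.TTheory GRing.Theory Num.Theory.
Local Open Scope ring_scope.

Set Implicit Arguments. Unset Strict Implicit. Unset Printing Implicit Defensive.

(* For the Hermitian form <x, y> = sum_A conj(x_A) y_A,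
   left multiplication by M^dagger is adjoint to left multiplication by M, so
   T u = 0 forces M u = 0 and T^2 u = 0 forces T u = 0.  Every column vector
   is (up to the block mask when n is odd) a column of some beta(u), so these
   kernel inclusions pass to the matrices: rank beta(T) = rank beta(M) and
   rank beta(T)^2 = rank beta(T).  A matrix A with rank A^2 = rank A is
   similar to diag(0, B) with B invertible of size rank A, so
   det(lambda - A) = lambda^(N - rank A) g(lambda) with g(0) <> 0: C_(j)(T)
   vanishes for j > rank beta(T) and C_(rank beta(T))(T) does not, and the
   four cases follow. *)

Section CharPolyRank.
Variable F : fieldType.

Lemma char_poly_similar n (P A B : 'M[F]_n) :
  P \in unitmx -> P *m A = B *m P -> char_poly A = char_poly B.
Proof.
move=> Pu PA; have -> : A = invmx P *m B *m P by rewrite -mulmxA -PA mulKmx.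
pose Pc := map_mx polyC P; pose Pci := map_mx polyC (invmx P).
have PciK : Pci *m Pc = 1%:M by rewrite -map_mxM mulVmx ?map_mx1.
rewrite /char_poly; have -> : char_poly_mx (invmx P *m B *m P) = Pci *m char_poly_mx B *m Pc.
  rewrite /char_poly_mx !map_mxM mulmxBr mulmxBl -[Pci *m _ *m Pc]mulmxA.
  by congr (_ - _); rewrite -mulmxA -scalar_mxC mulmxA PciK mul1mx.
by rewrite !det_mulmx mulrAC -det_mulmx PciK det1 mul1r.
Qed.

Lemma char_poly_block0 n1 n2 (B : 'M[F]_n2) :
  char_poly (block_mx 0 0 0 B : 'M_(n1 + n2)) = 'X^n1 * char_poly B.
Proof.
by rewrite /char_poly char_block_diag_mx det_ublock /char_poly_mx map_mx0 subr0 det_scalar.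
Qed.

Lemma char_poly_conj_block0 n1 n2 N (e : (n1 + n2)%N = N) (A : 'M[F]_N)
    (P : 'M[F]_(n1 + n2, N)) (B : 'M[F]_n2) :
  row_free P -> P *m A = block_mx 0 0 0 B *m P -> char_poly A = 'X^n1 * char_poly B.
Proof.
case: N / e in A P *; rewrite row_free_unit => Pu /(char_poly_similar Pu) ->.
exact: char_poly_block0.
Qed.

Lemma char_poly_mxrank_sqr N (A : 'M[F]_N) :
  \rank (A *m A) = \rank A ->
  exists2 g : {poly F}, char_poly A = 'X^(N - \rank A) * g & g`_0 != 0.
Proof.
move=> rankA2; have /mxrank_injP/eqP capA0 := rankA2.
set K := kermx A; set B := restrictmx A A.
have BA : B *m row_base A = row_base A *m A.
  by rewrite mulmxKpV // stablemx_row_base submxMl.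
have rankB : \rank B = \rank A.
  by rewrite -(mxrankMfree _ (row_base_free A)) BA (eqmxMr A (eq_row_base A)).
have Bu : B \in unitmx by rewrite -row_free_unit /row_free rankB.
set P := col_mx (row_base K) (row_base A).
have dimKA : (\rank K + \rank A)%N = N by rewrite mxrank_ker subnK ?rank_leq_col.
have Pfree : row_free P.
  rewrite /row_free -addsmxE mxrank_disjoint_sum ?eq_row_base //.
  apply/eqP; rewrite -mxrank_eq0 (cap_eqmx (eq_row_base K) (eq_row_base A)).
  by rewrite capmxC capA0 mxrank0.
have PA : P *m A = block_mx 0 0 0 B *m P.
  rewrite mul_col_mx mul_block_col !mul0mx !add0r BA; congr col_mx.
  by apply/sub_kermxP; rewrite eq_row_base.
exists (char_poly B); first by rewrite (char_poly_conj_block0 dimKA Pfree PA) mxrank_ker.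
by rewrite char_poly_det mulf_neq0 ?signr_eq0 // -unitfE -unitmxE.
Qed.

Lemma char_poly_coef_mxrank N (A : 'M[F]_N) :
  \rank (A *m A) = \rank A -> (char_poly A)`_(N - \rank A) != 0.
Proof. by case/char_poly_mxrank_sqr => g -> g0; rewrite coefXnM ltnn subnn. Qed.

Lemma char_poly_coef_gt_mxrank N (A : 'M[F]_N) j :
  \rank (A *m A) = \rank A -> (\rank A < j <= N)%N -> (char_poly A)`_(N - j) = 0.
Proof.
case/char_poly_mxrank_sqr => g -> _ /andP[rA_j jN].
by rewrite coefXnM ifT //; lia.
Qed.

Lemma mxrank_le_colker m1 m2 n (A : 'M[F]_(m1, n)) (B : 'M[F]_(m2, n)) :
  (forall c : 'cV_n, A *m c = 0 -> B *m c = 0) -> (\rank B <= \rank A)%N.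
Proof.
move=> AB; have : (kermx A^T <= kermx B^T)%MS.
  apply/row_subP => i; apply/sub_kermxP; apply: trmx_inj.
  rewrite trmx_mul trmxK trmx0 AB //.
  by rewrite -{1}[A]trmxK -trmx_mul (sub_kermxP (row_sub i _)) trmx0.
move/mxrankS; rewrite !mxrank_ker !mxrank_tr.
by have := rank_leq_col A; have := rank_leq_col B; lia.
Qed.

End CharPolyRank.

Section BlockColumns.
Variables (F : fieldType) (N : nat) (blocked : bool).

Definition block_diag_if (A : 'M[F]_N) : Prop :=
  if blocked then block_diag_mx A else True.

Definition same_block (i j : 'I_N) : bool :=
  blocked ==> ((i < N./2)%N == (j < N./2)%N).

Definition col_block (c : 'cV[F]_N) (j : 'I_N) : 'M[F]_N :=
  \matrix_(i, k) (((k == j) && same_block i j)%:R * c i 0).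

Lemma block_diag_if_mul_same_block (A : 'M[F]_N) i l j :
  block_diag_if A -> A i l * (same_block l j)%:R = (same_block i j)%:R * A i l.
Proof.
rewrite /block_diag_if /same_block; case: blocked => [Ab|_] /=; last by rewrite mulr1 mul1r.
have [-> | il] := eqVneq (i < N./2)%N (l < N./2)%N; first by rewrite mulrC.
by rewrite Ab ?mul0r ?mulr0.
Qed.

Lemma mul_col_block (A : 'M[F]_N) c j :
  block_diag_if A -> A *m col_block c j = col_block (A *m c) j.
Proof.
move=> Ab; apply/matrixP => i k; rewrite !mxE big_distrr /=; apply: eq_bigr => l _.
rewrite !mxE -!mulnb !natrM.
transitivity ((k == j)%:R * (A i l * (same_block l j)%:R) * c l 0); first by ring.
by rewrite block_diag_if_mul_same_block //; ring.
Qed.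

Lemma block_diag_if_col_block c j : block_diag_if (col_block c j).
Proof.
rewrite /block_diag_if; case: ifP => // bl i k ik; rewrite mxE /same_block bl.
by case: eqP => [kj | _]; rewrite ?mul0r //= -kj (negPf ik) mul0r.
Qed.

Lemma col_block_eq0 c : (forall j, col_block c j = 0) -> c = 0.
Proof.
move=> c0; apply/matrixP => i z; rewrite (ord1 z) mxE.
by have /matrixP/(_ i i) := c0 i; rewrite !mxE eqxx /same_block eqxx implybT mul1r.
Qed.

Lemma mxrank_le_block_diag_if (A B : 'M[F]_N) :
  block_diag_if A -> block_diag_if B ->
  (forall U, block_diag_if U -> A *m U = 0 -> B *m U = 0) -> (\rank B <= \rank A)%N.
Proof.
move=> Ab Bb AB; apply: mxrank_le_colker => c Ac; apply: col_block_eq0 => j.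
rewrite -mul_col_block // AB //; first exact: block_diag_if_col_block.
by rewrite mul_col_block // Ac; apply/matrixP => i k; rewrite !mxE mulr0.
Qed.

End BlockColumns.

(* A pair of elements b < a of A is the same as the two-element subset {a, b} of A. *)
Lemma card_ltn_pairs m (A : {set 'I_m}) :
  #|[set ab : 'I_m * 'I_m | (ab.1 \in A) && (ab.2 \in A) && (ab.2 < ab.1)%N]| = 'C(#|A|, 2).
Proof.
pose pair (ab : 'I_m * 'I_m) : {set 'I_m} := [set ab.1; ab.2].
rewrite -cards_draws -(@card_in_imset _ _ pair); last first.
  move=> [a b] [c d]; rewrite !inE /= => /andP[_ ba] /andP[_ dc] /setP e.
  move: (e a) (e b) (e c); rewrite !inE !eqxx /= orbT -!val_eqE /= => ha hb hc.
  by apply/eqP; rewrite xpair_eqE -!val_eqE /=; lia.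
apply: eq_card => S; rewrite !inE.
apply/imsetP/andP => [[[a b]] | [sA /cards2P[a [b [ab eS]]]]].
  rewrite inE /= => /andP[/andP[aA bA] ba] -> /=.
  rewrite /pair /= cards2 -val_eqE /=; split; last lia.
  by apply/subsetP => x; rewrite !inE => /orP[] /eqP ->.
have [aA bA] : a \in A /\ b \in A by split; apply: (subsetP sA); rewrite eS ?set21 ?set22.
rewrite eS; move: ab; rewrite -val_eqE /= neq_ltn => /orP[ab | ba].
  by exists (b, a); rewrite ?inE /= ?aA ?bA ?ab // /pair setUC.
by exists (a, b); rewrite ?inE /= ?aA ?bA ?ba.
Qed.

Section SymDiff.
Variable T : finType.
Implicit Types A B D : {set T}.

Definition symdiff A B : {set T} := (A :\: B) :|: (B :\: A).

Lemma symdiffK A : involutive (symdiff A).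
Proof. by move=> B; apply/setP => x; rewrite !inE; case: (x \in A); case: (x \in B). Qed.

Lemma symdiff_inj A : injective (symdiff A).
Proof. exact: inv_inj (symdiffK A). Qed.

Lemma symdiff_eqr A B D : (symdiff A B == D) = (B == symdiff A D).
Proof. by apply/eqP/eqP => [<- | ->]; rewrite symdiffK. Qed.

Lemma symdiffvv A : symdiff A A = set0.
Proof. by apply/setP => x; rewrite !inE; case: (x \in A). Qed.

Lemma symdiff0s A : symdiff set0 A = A.
Proof. by apply/setP => x; rewrite !inE; case: (x \in A). Qed.

End SymDiff.

Section CliffordProduct.
Variables (R : rcfType) (p q : nat).
Local Notation n := (p + q)%N.
Local Notation cl := (cl R p q).
Local Notation sgn := (@cl_sign R p q).
Local Notation eta := (@Defs.eta R p q).
Implicit Types (A B D : {set 'I_n}) (x y z : cl).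

Lemma cl_mulE x y D :
  cl_mul x y D = \sum_A x A * y (symdiff A D) * sgn A (symdiff A D).
Proof.
rewrite ffunE; apply: eq_bigr => A _.
by rewrite (big_pred1 (symdiff A D)) // => B; rewrite /= -symdiff_eqr.
Qed.

Lemma eta_sqr (a : 'I_n) : eta a * eta a = 1.
Proof. by rewrite /Defs.eta; case: ifP; rewrite ?mulr1 ?mulrNN ?mulr1. Qed.

Lemma conj_cl_sign A B : (sgn A B)^* = sgn A B.
Proof.
rewrite /cl_sign rmorphM rmorphXn rmorphN1 rmorph_prod; congr (_ * _).
by apply: eq_bigr => c _; rewrite /Defs.eta; case: ifP; rewrite ?rmorph1 ?rmorphN1.
Qed.

Lemma cl_sign_sqr A B : sgn A B * sgn A B = 1.
Proof.
rewrite /cl_sign mulrACA -exprMn mulrNN mulr1 expr1n mul1r -big_split /=.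
by rewrite big1 // => c _; rewrite eta_sqr.
Qed.

Lemma cl_sign0s A : sgn set0 A = 1.
Proof.
rewrite /cl_sign set0I big_set0 mulr1 (_ : [set _ | _] = set0) ?cards0 //.
by apply/setP => ab; rewrite !inE.
Qed.

Lemma basis_inv_coefE A : @basis_inv_coef R p q A = sgn A A.
Proof. by rewrite /basis_inv_coef /cl_sign setIid card_ltn_pairs. Qed.

Definition cl_basis A : cl := [ffun B => (B == A)%:R].

Lemma cl_mul_basis A B :
  cl_mul (cl_basis A) (cl_basis B) = cl_scale (sgn A B) (cl_basis (symdiff A B)).
Proof.
apply/ffunP => D; rewrite cl_mulE (bigD1 A) //= big1 ?addr0; last first.
  by move=> A' /negbTE nA; rewrite ffunE nA !mul0r.
rewrite !ffunE eqxx mul1r [symdiff A D == B]eq_sym -symdiff_eqr [D == _]eq_sym.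
by case: eqP => [<- | _]; rewrite ?symdiffK ?mul1r ?mulr1 ?mul0r ?mulr0.
Qed.

Definition cl_dot x y : R[i] := \sum_A (x A)^* * y A.

Lemma conj_cl_dot x y : (cl_dot x y)^* = cl_dot y x.
Proof.
by rewrite /cl_dot rmorph_sum; apply: eq_bigr => A _; rewrite rmorphM /= conjCK mulrC.
Qed.

Lemma cl_dot_eq0 z : cl_dot z z = 0 -> z = cl_zero R p q.
Proof.
move=> z0; apply/ffunP => A; rewrite ffunE.
have z_ge0 B : xpredT B -> 0 <= (z B)^* * z B by rewrite mulrC mul_conjC_ge0.
have := psumr_eq0P z_ge0 z0 (i := A) isT.
by move/eqP; rewrite mulrC mul_conjC_eq0 => /eqP.
Qed.

Lemma cl_dotx0 x : cl_dot x (cl_zero R p q) = 0.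
Proof. by rewrite /cl_dot big1 // => A _; rewrite ffunE mulr0. Qed.

End CliffordProduct.

Section CliffordIso.
Variables (R : rcfType) (p q : nat).
Local Notation n := (p + q)%N.
Local Notation N := (cl_N n).
Local Notation cl := (cl R p q).
Local Notation sgn := (@cl_sign R p q).
Local Notation zero := (cl_zero R p q).
Variable beta : cl -> 'M[R[i]]_N.
Hypothesis beta_iso : is_cl_iso beta.
Implicit Types (A B : {set 'I_n}) (x y z u v : cl).

Let betaD x y : beta (cl_add x y) = beta x + beta y.
Proof. by case: beta_iso. Qed.
Let betaZ c x : beta (cl_scale c x) = c *: beta x.
Proof. by case: beta_iso => _ []. Qed.
Let betaM x y : beta (cl_mul x y) = beta x *m beta y.
Proof. by case: beta_iso => _ [] _ []. Qed.
Let beta_inj : injective beta.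
Proof. by case: beta_iso => _ [] _ [] _ [] _ []. Qed.
Let beta_image (U : 'M[R[i]]_N) : (exists x, beta x = U) <-> block_diag_if (odd n) U.
Proof. by case: beta_iso => _ [] _ [] _ [] _ [] _. Qed.

Lemma beta0 : beta zero = 0.
Proof.
have zeroD : cl_add zero zero = zero by apply/ffunP => A; rewrite !ffunE addr0.
by apply: (@addrI _ (beta zero)); rewrite -betaD zeroD addr0.
Qed.

Lemma beta_eq0 x : (beta x == 0) = (x == zero).
Proof. by rewrite -beta0 (inj_eq beta_inj). Qed.

Lemma cl_mulA : associative (@cl_mul R p q).
Proof. by move=> x y z; apply: beta_inj; rewrite !betaM mulmxA. Qed.

Lemma cl_mulZl c x y : cl_mul (cl_scale c x) y = cl_scale c (cl_mul x y).
Proof. by apply: beta_inj; rewrite betaM !betaZ betaM scalemxAl. Qed.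

Lemma cl_mulZr c x y : cl_mul x (cl_scale c y) = cl_scale c (cl_mul x y).
Proof. by apply: beta_inj; rewrite betaM !betaZ betaM scalemxAr. Qed.

(* (e_A e_A) e_B = e_A (e_A e_B); associativity comes for free through beta. *)
Lemma cl_sign_symdiff A B : sgn A A = sgn A B * sgn A (symdiff A B).
Proof.
have := congr1 (fun x : cl => x B) (cl_mulA (cl_basis R A) (cl_basis R A) (cl_basis R B)).
rewrite /= !cl_mul_basis cl_mulZr cl_mulZl !cl_mul_basis !ffunE.
by rewrite symdiffK symdiffvv symdiff0s cl_sign0s eqxx ?mulr1 ?mul1r => ->.
Qed.

Lemma cl_sign_basis_inv A B : sgn A B = @basis_inv_coef R p q A * sgn A (symdiff A B).
Proof. by rewrite basis_inv_coefE (cl_sign_symdiff A B) -mulrA cl_sign_sqr mulr1. Qed.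

Lemma cl_dot_mull x u v : cl_dot (cl_mul x u) v = cl_dot u (cl_mul (cl_dag x) v).
Proof.
rewrite /cl_dot.
under eq_bigr do rewrite cl_mulE rmorph_sum mulr_suml.
under [RHS]eq_bigr do rewrite cl_mulE mulr_sumr.
rewrite exchange_big [RHS]exchange_big /=; apply: eq_bigr => A _.
rewrite (reindex_inj (@symdiff_inj _ A)) /=; apply: eq_bigr => B _.
rewrite symdiffK ffunE 2!rmorphM /= conj_cl_sign (cl_sign_basis_inv A B).
ring.
Qed.

Lemma cl_dot_mull_dag x u v : cl_dot (cl_mul (cl_dag x) u) v = cl_dot u (cl_mul x v).
Proof. by rewrite -[LHS]conj_cl_dot -cl_dot_mull conj_cl_dot. Qed.

Lemma cl_mul_dag_eq0 x u : cl_mul (cl_mul (cl_dag x) x) u = zero -> cl_mul x u = zero.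
Proof.
by move=> xxu0; apply: cl_dot_eq0; rewrite cl_dot_mull cl_mulA xxu0 cl_dotx0.
Qed.

Lemma cl_mul_dag_sqr_eq0 x u : let T := cl_mul (cl_dag x) x in
  cl_mul (cl_mul T T) u = zero -> cl_mul T u = zero.
Proof.
move=> T TTu0; apply: cl_dot_eq0.
rewrite {1}/T -cl_mulA cl_dot_mull_dag cl_dot_mull !cl_mulA -/T -(cl_mulA T) -/T TTu0.
exact: cl_dotx0.
Qed.

Lemma mxrank_beta_le x y :
  (forall u, cl_mul x u = zero -> cl_mul y u = zero) -> (\rank (beta y) <= \rank (beta x))%N.
Proof.
have beta_block z : block_diag_if (odd n) (beta z) by apply/beta_image; exists z.
move=> xy; apply: mxrank_le_block_diag_if (beta_block x) (beta_block y) _ => U.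
case/beta_image => u <- xu0; apply/eqP; rewrite -betaM beta_eq0 xy //.
by apply/eqP; rewrite -beta_eq0 betaM xu0.
Qed.

Lemma mxrank_beta_dag_mul x : \rank (beta (cl_mul (cl_dag x) x)) = \rank (beta x).
Proof.
apply/eqP; rewrite eqn_leq {1}betaM mxrankM_maxr /=.
exact/mxrank_beta_le/cl_mul_dag_eq0.
Qed.

Lemma mxrank_beta_dag_mul_sqr x : let T := cl_mul (cl_dag x) x in
  \rank (beta T *m beta T) = \rank (beta T).
Proof.
move=> T; apply/eqP; rewrite eqn_leq mxrankM_maxr -betaM /=.
exact/mxrank_beta_le/cl_mul_dag_sqr_eq0.
Qed.

Lemma charcoefN_eq0 x : (charcoef beta N x == 0) = (\det (beta x) == 0).
Proof. by rewrite /charcoef subnn char_poly_det oppr_eq0 mulf_eq0 signr_eq0. Qed.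

Lemma charcoefN_mull x y : charcoef beta N y = 0 -> charcoef beta N (cl_mul x y) = 0.
Proof.
move/eqP; rewrite charcoefN_eq0 => /eqP det0.
by apply/eqP; rewrite charcoefN_eq0 betaM det_mulmx det0 mulr0.
Qed.

End CliffordIso.

Unset Implicit Arguments. Set Strict Implicit.

Theorem theorem4 (R : realType) (p q : nat) (Hn : (0 < p + q)%N)
  (beta : cl R p q -> 'M[R[i]]_(cl_N (p + q))) (Hbeta : is_cl_iso beta)
  (M : cl R p q) :
  let N := cl_N (p + q) in
  let T := cl_mul (cl_dag M) M in
  [/\ charcoef beta N M != 0 -> \rank (beta M) = N,
      forall k : nat, (2 <= k <= N - 1)%N ->
        charcoef beta N M = 0 ->
        (forall j : nat, (k + 1 <= j <= N - 1)%N -> charcoef beta j T = 0) ->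
        charcoef beta k T != 0 -> \rank (beta M) = k,
      charcoef beta N M = 0 ->
        (forall j : nat, (2 <= j <= N - 1)%N -> charcoef beta j T = 0) ->
        M != cl_zero R p q -> \rank (beta M) = 1%N &
      M = cl_zero R p q -> \rank (beta M) = 0%N].
Proof.
move=> N T.
have rankTM : \rank (beta T) = \rank (beta M) := mxrank_beta_dag_mul Hbeta M.
have rankT2 : \rank (beta T *m beta T) = \rank (beta T) := mxrank_beta_dag_mul_sqr Hbeta M.
set r := \rank (beta T) in rankTM rankT2.
have coefT_r : charcoef beta r T != 0 by rewrite oppr_eq0 char_poly_coef_mxrank.
have coefT_gt j : (r < j <= N)%N -> charcoef beta j T = 0.
  by move=> rjN; rewrite /charcoef char_poly_coef_gt_mxrank ?oppr0.
have r_le j : charcoef beta N T = 0 ->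
    (forall i, (j < i <= N - 1)%N -> charcoef beta i T = 0) -> (r <= j)%N.
  move=> coefN coef0; rewrite leqNgt; apply: contraNN coefT_r => jr.
  have [-> | rN] := eqVneq r N; first by rewrite coefN.
  by apply/eqP/coef0; rewrite jr /=; have := rank_leq_row (beta T); lia.
split.
- by rewrite charcoefN_eq0 => det_neq0; rewrite mxrank_unit // unitmxE unitfE.
- move=> k /andP[k2 kN] /(charcoefN_mull Hbeta (cl_dag M)) coefN coefj coefk_ne0.
  rewrite -rankTM; have r_k : (r <= k)%N by apply: r_le => // i; rewrite -addn1; apply: coefj.
  apply/eqP; rewrite eqn_leq r_k leqNgt; apply: contra coefk_ne0 => rk.
  by rewrite coefT_gt // rk /=; lia.
- move=> /(charcoefN_mull Hbeta (cl_dag M)) coefN coefj M_neq0.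
  have r_neq0 : r != 0%N by rewrite rankTM mxrank_eq0 beta_eq0.
  rewrite -rankTM.
  by have := r_le 1%N coefN coefj; lia.
- by move=> ->; rewrite beta0 // mxrank0.
Qed.
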